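(* Let $\pi$ be a finitely refining sequence of partitions of $[0,1]$. Then for all $n\ge1$, $m\le n-1$ and $k$, $$\underline{\pi^n}\le a^n_{m,k}(1)\le|\pi^n|.$$ If moreover $\pi$ is balanced, there is a constant $C<\infty$ (depending only on $\pi$) such that for all $n\ge1$ and all distinct $(m,k),(m',k')$ with $m,m'\le n-1$ and $[t^{m,k}_1,t^{m,k}_3]\subseteq[t^{m',k'}_1,t^{m',k'}_3]$, $$|b^n_{m,k,m',k'}(1)|\le C\,(|\pi^n|-\underline{\pi^n})\sqrt{|\pi^m|/|\pi^{m'}|},$$ while $b^n_{m,k,m',k'}(1)=0$ if the supports of $e^\pi_{m,k}$ and $e^\pi_{m',k'}$ have disjoint interiors.
   Context: A partition of $[0,1]$ is a finite set $\{0=t_0<t_1<\dots<t_N=1\}$; for a partition $\pi^n=\{0=t^n_0<\dots<t^n_{N(\pi^n)}=1\}$, $N(\pi^n)$ is its number of intervals, $|\pi^n|=\max_i(t^n_{i+1}-t^n_i)$ and $\underline{\pi^n}=\min_i(t^n_{i+1}-t^n_i)$. A sequence $\pi=(\pi^n)_{n\ge0}$ of partitions of $[0,1]$, with the convention $\pi^0=\{0,1\}$, is finitely refining if $\pi^n\subseteq\pi^{n+1}$ for all $n$, $|\pi^n|\to0$, and there is $M<\infty$ such that for every $n$ each interval $[t^n_i,t^n_{i+1}]$ contains at most $M$ points of $\pi^{n+1}$. It is balanced if $\sup_{n\ge1}|\pi^n|/\underline{\pi^n}<\infty$. Haar and Schauder functions of a finitely refining $\pi$: for each level $m\ge0$ and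 each interval $[u_0,u_r]$ of $\pi^m$, let $u_0<u_1<\dots<u_r$ be the points of $\pi^{m+1}$ lying in $[u_0,u_r]$. For each $i\in\{2,\dots,r\}$ put $t_1=u_0$, $t_2=u_{i-1}$, $t_3=u_i$ and define $\psi(s)=\sqrt{\frac{t_3-t_2}{(t_2-t_1)(t_3-t_1)}}$ for $s\in[t_1,t_2)$, $\psi(s)=-\sqrt{\frac{t_2-t_1}{(t_3-t_2)(t_3-t_1)}}$ for $s\in[t_2,t_3)$, $\psi(s)=0$ otherwise, and $e(t)=\int_0^t\psi(s)\,ds$ (a continuous hat function vanishing outside $[t_1,t_3]$, affine on $[t_1,t_2]$ and on $[t_2,t_3]$, maximal at $t_2$). Ranging over all intervals of $\pi^m$ and all such $i$ gives $N(\pi^{m+1})-N(\pi^m)$ functions at level $m$, enumerated in a fixed order as $\psi_{m,k}$, $e^\pi_{m,k}$, $k=0,\dots,N(\pi^{m+1})-N(\pi^m)-1$, with associated points $t^{m,k}_1<t^{m,k}_2<t^{m,k}_3$ (so $[t^{m,k}_1,t^{m,k}_3]$ is the support of $e^\pi_{m,k}$ and $t^{m,k}_2$ its maximum point). Coefficients: for $n\ge1$, $t\in[0,1]$, let $\Delta t^n_i=t^n_{i+1}\wedge t-t^n_i\wedge t$. For $m\le n-1$ and each $k$, with $t_j=t^{m,k}_j$, let $S_1=\sum_{i:[t^n_i,t^n_{i+1}]\subseteq[t_1,t_2]}(\Delta t^n_i)^2$, $S_2=\sum_{i:[t^n_i,t^n_{i+1}]\subseteq[t_2,t_3]}(\Delta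 t^n_i)^2$ and $a^n_{m,k}(t)=\frac{1}{t_3-t_1}\Big(S_1\frac{t_3-t_2}{t_2-t_1}+S_2\frac{t_2-t_1}{t_3-t_2}\Big)$. For distinct $(m,k),(m',k')$ with $m,m'\le n-1$: if $[t^{m,k}_1,t^{m,k}_3]\subseteq[t^{m',k'}_1,t^{m',k'}_3]$, set $b^n_{m,k,m',k'}(t)=\psi_{m',k'}(t^{m,k}_1)\Big(\frac{S_1}{t_2-t_1}-\frac{S_2}{t_3-t_2}\Big)\sqrt{\frac{(t_2-t_1)(t_3-t_2)}{t_3-t_1}}$ (with $S_1,S_2,t_j$ computed for $(m,k)$) and set $b^n_{m',k',m,k}(t)=b^n_{m,k,m',k'}(t)$; if neither support contains the other, set $b^n_{m,k,m',k'}(t)=0$. (Two distinct supports are always either nested or have disjoint interiors.) *)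

From HB Require Import structures.
From mathcomp Require Import all_boot all_order all_algebra.
From mathcomp Require Import all_classical all_reals all_analysis.
Set Implicit Arguments. Unset Strict Implicit. Unset Printing Implicit Defensive.
Import Order.TTheory GRing.Theory Num.Theory numFieldNormedType.Exports.
Local Open Scope classical_set_scope.
Local Open Scope ring_scope.

Section Defs.
Variable R : realType.

Definition is_partition (p : seq R) : Prop :=
  sorted <%R p /\ p`_0 = 0 /\ last 0 p = 1.

Definition gaps (p : seq R) : seq R :=
  [seq p`_i.+1 - p`_i | i <- iota 0 (size p).-1].

Definition mesh (p : seq R) : R := \big[Num.max/0]_(g <- gaps p) g.

(* underline{p} : smallest interval length (all lengths of a partition of
   [0,1] are <= 1, so 1 is a neutral element here) *)
Definition mingap (p : seq R) : R := \big[Num.min/1]_(g <- gaps p) g.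

Definition finitely_refining (pi : nat -> seq R) : Prop :=
  [/\ pi 0%N = [:: 0; 1],
      (forall n, is_partition (pi n)),
      (forall n, {subset pi n <= pi n.+1}),
      (fun n => mesh (pi n)) @ \oo --> (0 : R)
    & exists M : nat, forall n i, (i < (size (pi n)).-1)%N ->
        (count (fun x => ((pi n)`_i <= x <= (pi n)`_i.+1)%R) (pi n.+1) <= M)%N].

Definition balanced (pi : nat -> seq R) : Prop :=
  exists K : R, forall n, (1 <= n)%N -> mesh (pi n) / mingap (pi n) <= K.

Definition sub_points (pi : nat -> seq R) (m i : nat) : seq R :=
  [seq x <- pi m.+1 | (pi m)`_i <= x <= (pi m)`_i.+1].

(* The level-m triples (t_1,t_2,t_3) = (u_0, u_{j-1}, u_j), j = 2..r,
   for each interval of pi^m in order; index k of the list is the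
   enumeration index of psi_{m,k}, e_{m,k}. *)
Definition haar_triples (pi : nat -> seq R) (m : nat) : seq (R * R * R) :=
  flatten [seq (let u := sub_points pi m i in
                [seq (u`_0, u`_j.-1, u`_j) | j <- iota 2 (size u).-2])
          | i <- iota 0 (size (pi m)).-1].

Definition ntriples (pi : nat -> seq R) (m : nat) : nat :=
  size (haar_triples pi m).

Definition trip (pi : nat -> seq R) (m k : nat) : R * R * R :=
  nth (0, 0, 0) (haar_triples pi m) k.
Definition tt1 pi m k : R := (trip pi m k).1.1.
Definition tt2 pi m k : R := (trip pi m k).1.2.
Definition tt3 pi m k : R := (trip pi m k).2.

Definition psi (pi : nat -> seq R) (m k : nat) (s : R) : R :=
  let t1 := tt1 pi m k in let t2 := tt2 pi m k in let t3 := tt3 pi m k in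
  if (t1 <= s) && (s < t2) then Num.sqrt ((t3 - t2) / ((t2 - t1) * (t3 - t1)))
  else if (t2 <= s) && (s < t3) then - Num.sqrt ((t2 - t1) / ((t3 - t2) * (t3 - t1)))
  else 0.

Definition dlt (p : seq R) (i : nat) (t : R) : R :=
  Num.min p`_i.+1 t - Num.min p`_i t.

Definition Ssum (p : seq R) (x y t : R) : R :=
  \sum_(i < (size p).-1 | (x <= p`_i) && (p`_i.+1 <= y)) (dlt p i t) ^+ 2.

Definition S1 pi n m k t := Ssum (pi n) (tt1 pi m k) (tt2 pi m k) t.
Definition S2 pi n m k t := Ssum (pi n) (tt2 pi m k) (tt3 pi m k) t.

Definition acoef (pi : nat -> seq R) (n m k : nat) (t : R) : R :=
  let t1 := tt1 pi m k in let t2 := tt2 pi m k in let t3 := tt3 pi m k in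
  (t3 - t1)^-1 * (S1 pi n m k t * ((t3 - t2) / (t2 - t1))
                  + S2 pi n m k t * ((t2 - t1) / (t3 - t2))).

Definition supp_sub (pi : nat -> seq R) (m k m' k' : nat) : bool :=
  (tt1 pi m' k' <= tt1 pi m k) && (tt3 pi m k <= tt3 pi m' k').

Definition supp_disj (pi : nat -> seq R) (m k m' k' : nat) : bool :=
  (tt3 pi m k <= tt1 pi m' k') || (tt3 pi m' k' <= tt1 pi m k).

Definition bnest (pi : nat -> seq R) (n m k m' k' : nat) (t : R) : R :=
  let t1 := tt1 pi m k in let t2 := tt2 pi m k in let t3 := tt3 pi m k in
  psi pi m' k' t1 * (S1 pi n m k t / (t2 - t1) - S2 pi n m k t / (t3 - t2))
  * Num.sqrt ((t2 - t1) * (t3 - t2) / (t3 - t1)).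

Definition bcoef (pi : nat -> seq R) (n m k m' k' : nat) (t : R) : R :=
  if supp_sub pi m k m' k' then bnest pi n m k m' k' t
  else if supp_sub pi m' k' m k then bnest pi n m' k' m k t
  else 0.

End Defs.

(* Since pi^m is contained in pi^n for m < n, the three points t_1 < t_2 < t_3 of
   every Haar triple of level m are points of pi^n; at t = 1 every Delta t^n_i is
   a full gap, so S_1 and S_2 are sums of squared gaps of pi^n over [t_1, t_2] and
   [t_2, t_3].  Hence the ratios S_1 / (t_2 - t_1) and S_2 / (t_3 - t_2) lie
   between the smallest and the largest gap of pi^n, and a^n_{m,k}(1) is a convex
   combination of them.  For nested supports, b^n is psi_{m',k'}(t_1) times the
   difference of the two ratios (at most |pi^n| - underline{pi^n}) times a factor
   at most sqrt (t_3 - t_1) <= sqrt |pi^m|.  Finally |psi_{m',k'}| is at most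
   underline{pi^{m'+1}}^(-1/2) <= (M K / |pi^{m'}|)^(1/2): an interval of pi^{m'}
   holds at most M points of pi^{m'+1}, so |pi^{m'}| <= M |pi^{m'+1}|, and balance
   gives |pi^{m'+1}| <= K underline{pi^{m'+1}}.  Supports with disjoint interiors
   are never nested, so b^n vanishes on them. *)

From HB Require Import structures.
From mathcomp Require Import all_boot all_order all_algebra.
From mathcomp Require Import all_classical all_reals all_analysis.
From mathcomp Require Import zify ring lra.
Import Order.TTheory GRing.Theory Num.Theory.
Set Implicit Arguments. Unset Strict Implicit. Unset Printing Implicit Defensive.
Local Open Scope ring_scope.

Lemma big_nat_window (T : Type) (idx : T) (op : Monoid.law idx) (N a b : nat)
    (F : nat -> T) : (b <= N)%N ->
  \big[op/idx]_(i < N | (a <= i < b)%N) F i = \big[op/idx]_(a <= i < b) F i.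
Proof.
move=> bN; rewrite -(big_mkord (fun i => a <= i < b)%N).
by rewrite [RHS](big_nat_widenl _ 0) // [RHS](big_nat_widen _ _ N).
Qed.

Lemma subset_chain (T : eqType) (f : nat -> seq T) :
  (forall n, {subset f n <= f n.+1}) -> forall m n, (m <= n)%N -> {subset f m <= f n}.
Proof.
move=> sub m n /subnK <-; elim: (n - m)%N => // d IH x /IH.
by rewrite addSn; apply: sub.
Qed.

Section Partitions.
Variable R : realType.
Implicit Types (p q : seq R) (x y : R).

Lemma sorted_leq_nthE p i j : sorted <%R p ->
  (i < size p)%N -> (j < size p)%N -> (p`_i <= p`_j) = (i <= j)%N.
Proof. by move=> sp ip jp; apply: (lt_sorted_leq_nth 0 sp). Qed.

Lemma sorted_ltn_nthE p i j : sorted <%R p ->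
  (i < size p)%N -> (j < size p)%N -> (p`_i < p`_j) = (i < j)%N.
Proof. by move=> sp ip jp; apply: (lt_sorted_ltn_nth 0 sp). Qed.

Lemma gap_in_gaps p i : (i < (size p).-1)%N -> p`_i.+1 - p`_i \in gaps p.
Proof. by move=> ip; apply/mapP; exists i; rewrite ?mem_iota. Qed.

Lemma gap_le_mesh p i : (i < (size p).-1)%N -> p`_i.+1 - p`_i <= mesh p.
Proof.
move=> /gap_in_gaps; rewrite /mesh; elim: (gaps p) => // g s IH.
by rewrite in_cons big_cons le_max => /orP[/eqP<-|/IH->]; rewrite ?lexx ?orbT.
Qed.

Lemma mingap_le_gap p i : (i < (size p).-1)%N -> mingap p <= p`_i.+1 - p`_i.
Proof.
move=> /gap_in_gaps; rewrite /mingap; elim: (gaps p) => // g s IH.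
by rewrite in_cons big_cons ge_min => /orP[/eqP<-|/IH->]; rewrite ?lexx ?orbT.
Qed.

Lemma mesh_ge0 p : 0 <= mesh p.
Proof.
by rewrite /mesh; elim: (gaps p) => [|g s IH]; rewrite ?big_nil // big_cons le_max IH orbT.
Qed.

Lemma mesh_le p B : 0 <= B ->
  (forall i, (i < (size p).-1)%N -> p`_i.+1 - p`_i <= B) -> mesh p <= B.
Proof.
move=> B0 gapB; rewrite /mesh /gaps big_map big_seq.
apply: (big_ind (fun x => x <= B)) => // [x y xB yB|i]; first by rewrite ge_max xB yB.
by rewrite mem_iota => /andP[_ ip]; apply: gapB.
Qed.

Lemma mingap_gt0 p : sorted <%R p -> 0 < mingap p.
Proof.
move=> sp; rewrite /mingap /gaps big_map big_seq.
apply: (big_ind (fun x => 0 < x)) => // [x y x0 y0|i]; first by rewrite lt_min x0 y0.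
rewrite mem_iota subr_gt0 => /andP[_ ip]; rewrite sorted_ltn_nthE //; lia.
Qed.

Lemma mingap_le_sub q x y : sorted <%R q -> x \in q -> y \in q -> x < y ->
  mingap q <= y - x.
Proof.
move=> sq /(nthP 0)[a aq <-] /(nthP 0)[b bq <-]; rewrite sorted_ltn_nthE // => ab.
have a1q : (a.+1 < size q)%N := leq_ltn_trans ab bq.
have : q`_a.+1 <= q`_b by rewrite sorted_leq_nthE.
have := @mingap_le_gap q a; rewrite -subn1 ltn_subRL add1n => /(_ a1q); lra.
Qed.

Lemma size_partition p : is_partition p -> (1 < size p)%N.
Proof.
case=> _ [p0 p1]; case: p p0 p1 => [|x [|y s]] // => [_|/= ->] /eqP;
  by rewrite eq_sym oner_eq0.
Qed.

Lemma partition_le1 p j : is_partition p -> (j < size p)%N -> p`_j <= 1.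
Proof.
move=> pp jp; have p2 := size_partition pp; case: pp => sp [_ <-].
have p0 : (0 < size p)%N := ltnW p2.
by rewrite -nth_last sorted_leq_nthE ?ltn_predL // -ltnS prednK.
Qed.

Lemma mesh_gt0 p : is_partition p -> 0 < mesh p.
Proof.
move=> pp; have p2 := size_partition pp; case: pp => sp _.
have p1 : (0 < (size p).-1)%N by rewrite -ltnS prednK // ltnW.
by apply: lt_le_trans (gap_le_mesh p1); rewrite subr_gt0 sorted_ltn_nthE // ltnW.
Qed.

Lemma Ssum1_nth p a b : is_partition p -> (a <= b)%N -> (b < size p)%N ->
  Ssum p p`_a p`_b 1 = \sum_(a <= i < b) (p`_i.+1 - p`_i) ^+ 2.
Proof.
move=> pp ab bp; have [sp _] := pp.
rewrite /Ssum -(@big_nat_window _ _ _ (size p).-1); last by lia.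
apply: eq_big => i; have ip := ltn_ord i.
  by rewrite !sorted_leq_nthE //; lia.
move=> _; rewrite /dlt !min_l // partition_le1 //; lia.
Qed.

Lemma Ssum1_nth_bounds p a b : is_partition p -> (a <= b)%N -> (b < size p)%N ->
  mingap p * (p`_b - p`_a) <= Ssum p p`_a p`_b 1 <= mesh p * (p`_b - p`_a).
Proof.
move=> pp ab bp; have [sp _] := pp.
rewrite Ssum1_nth // -(telescope_sumr (fun i => p`_i)) // !mulr_sumr.
have ip i : (i < b)%N -> (i < (size p).-1)%N by lia.
have gap_ge0 i : (i < b)%N -> 0 <= p`_i.+1 - p`_i.
  by move=> /ip /mingap_le_gap; apply: le_trans; apply: ltW (mingap_gt0 sp).
apply/andP; split; apply: ler_sum_nat => i /andP[_ ib];
  rewrite expr2 ler_wpM2r ?gap_ge0 //.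
- exact: mingap_le_gap (ip _ ib).
- exact: gap_le_mesh (ip _ ib).
Qed.

Lemma count_window q a b : sorted <%R q -> (a <= b)%N -> (b < size q)%N ->
  (b.+1 - a <= count (fun x => (q`_a <= x <= q`_b)%R) q)%N.
Proof.
move=> sq ab bq; rewrite -sum1_count (big_nth 0) big_mkord.
rewrite -[X in (X <= _)%N]muln1 -sum_nat_const_nat -(@big_nat_window _ _ _ (size q)) //.
rewrite big_mkcond [X in (_ <= X)%N]big_mkcond; apply: leq_sum => i _.
case: ifP => // /andP[ai]; rewrite ltnS => ib.
by rewrite !sorted_leq_nthE ?ai ?ib ?(leq_ltn_trans ab bq).
Qed.

Lemma mesh_le_refinement (M : nat) p q :
  sorted <%R p -> sorted <%R q -> {subset p <= q} ->
  (forall i, (i < (size p).-1)%N ->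
     (count (fun x => (p`_i <= x <= p`_i.+1)%R) q <= M)%N) ->
  mesh p <= M%:R * mesh q.
Proof.
move=> sp sq pq countM; apply: mesh_le => [|i ip]; first by rewrite mulr_ge0 ?mesh_ge0.
have i1p : (i.+1 < size p)%N by case: (size p) ip.
have [a aq ea] := nthP 0 (pq _ (mem_nth 0 (ltnW i1p))).
have [b bq eb] := nthP 0 (pq _ (mem_nth 0 i1p)).
have ab : (a < b)%N by rewrite -(sorted_ltn_nthE sq) // ea eb sorted_ltn_nthE // ltnW.
have baM : (b - a <= M)%N.
  have := countM i ip; rewrite -ea -eb.
  by move=> /(leq_trans (count_window sq (ltnW ab) bq)); lia.
rewrite -ea -eb -(telescope_sumr (fun j => q`_j)) ?(ltnW ab) //.
apply: le_trans (_ : \sum_(a <= j < b) mesh q <= _).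
  apply: ler_sum_nat => j /andP[_ jb]; apply: gap_le_mesh.
  by rewrite -ltnS prednK ?(leq_ltn_trans jb) // (leq_ltn_trans _ aq).
rewrite sumr_const_nat -[_ *+ _]mulr_natl.
by apply: ler_wpM2r; rewrite ?mesh_ge0 ?ler_nat.
Qed.

End Partitions.

Lemma weighted_ratio_bounds (R : realFieldType) (g G d1 d2 S1 S2 : R) :
  0 < d1 -> 0 < d2 -> g <= S1 / d1 <= G -> g <= S2 / d2 <= G ->
  g <= (d1 + d2)^-1 * (S1 * (d2 / d1) + S2 * (d1 / d2)) <= G.
Proof.
move=> d1p d2p /andP[g1 G1] /andP[g2 G2].
have -> : (d1 + d2)^-1 * (S1 * (d2 / d1) + S2 * (d1 / d2)) =
          (d2 * (S1 / d1) + d1 * (S2 / d2)) / (d1 + d2).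
  by field; rewrite ?lt0r_neq0 ?addr_gt0.
rewrite ler_pdivlMr ?ler_pdivrMr ?addr_gt0 //.
move: (S1 / d1) (S2 / d2) g1 G1 g2 G2 => r1 r2 g1 G1 g2 G2.
apply/andP; split; nra.
Qed.

Lemma nested_coef_bound (R : rcfType) (ps B g G d1 d2 r1 r2 L : R) :
  `|ps| <= B -> 0 < d1 -> 0 < d2 -> d1 + d2 <= L ->
  g <= r1 <= G -> g <= r2 <= G ->
  `|ps * (r1 - r2) * Num.sqrt (d1 * d2 / (d1 + d2))| <= B * (G - g) * Num.sqrt L.
Proof.
move=> psB d1p d2p dL /andP[g1 G1] /andP[g2 G2].
have dr : `|r1 - r2| <= G - g by rewrite ler_norml; apply/andP; split; lra.
have dsL : Num.sqrt (d1 * d2 / (d1 + d2)) <= Num.sqrt L.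
  rewrite ler_sqrt; last by lra.
  apply: le_trans dL; rewrite ler_pdivrMr ?addr_gt0 //; nra.
rewrite !normrM (ger0_norm (sqrtr_ge0 _)).
apply: ler_pM; rewrite ?mulr_ge0 ?normr_ge0 ?sqrtr_ge0 //.
by apply: ler_pM; rewrite ?normr_ge0.
Qed.

Section HaarCoefficients.
Variables (R : realType) (pi : nat -> seq R).

Lemma haar_triple_spec m k : sorted <%R (pi m.+1) -> (k < ntriples pi m)%N ->
  [/\ tt1 pi m k < tt2 pi m k, tt2 pi m k < tt3 pi m k,
      [/\ tt1 pi m k \in pi m.+1, tt2 pi m k \in pi m.+1 & tt3 pi m k \in pi m.+1]
    & exists2 i, (i < (size (pi m)).-1)%N &
        (pi m)`_i <= tt1 pi m k /\ tt3 pi m k <= (pi m)`_i.+1].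
Proof.
move=> sq /(mem_nth (0, 0, 0)); rewrite /tt1 /tt2 /tt3 /trip.
case/flattenP=> _ /mapP[i + ->] /mapP[j + ->] /=; rewrite !mem_iota /= => ip jr.
have j1 : (0 < j.-1)%N by case: j jr => [|[|j]].
have j0 : (0 < j)%N := leq_trans j1 (leq_pred j).
set u := sub_points pi m i in jr *.
have su : sorted <%R u by apply: sorted_filter => //; apply: lt_trans.
have ju : (j < size u)%N by move: jr; case: (size u) => [|[|n]] /=; lia.
have mem_u l : (l <= j)%N -> u`_l \in pi m.+1 /\ (pi m)`_i <= u`_l <= (pi m)`_i.+1.
  by move=> lj; have := mem_nth 0 (leq_ltn_trans lj ju); rewrite mem_filter andbC => /andP.
have [u0 /andP[u0i _]] := mem_u 0%N isT.
have [u1 _] := mem_u j.-1 (leq_pred j).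
have [u2 /andP[_ u2i]] := mem_u j (leqnn j).
have j1u : (j.-1 < size u)%N := leq_ltn_trans (leq_pred j) ju.
split; [| | by split | by exists i].
- by rewrite sorted_ltn_nthE // (ltn_trans j1).
- by rewrite sorted_ltn_nthE // ltn_predL.
Qed.

Lemma psi_le_sqrt_inv m k s g : 0 < g ->
  g <= tt2 pi m k - tt1 pi m k -> g <= tt3 pi m k - tt2 pi m k ->
  `|psi pi m k s| <= Num.sqrt g^-1.
Proof.
move=> g0 g21 g32; rewrite /psi.
set t1 := tt1 pi m k; set t2 := tt2 pi m k; set t3 := tt3 pi m k.
have ratio_le a b : g <= a -> 0 < b -> b / (a * (a + b)) <= g^-1.
  move=> ga b0; have a0 : 0 < a := lt_le_trans g0 ga.
  apply: le_trans (_ : a^-1 <= _); last by rewrite lef_pV2 ?posrE.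
  rewrite ler_pdivrMr ?mulr_gt0 ?addr_gt0 // mulrA mulVf ?lt0r_neq0 // mul1r.
  by rewrite lerDr ltW.
have g_ge0 : 0 <= g^-1 by rewrite invr_ge0 ltW.
case: ifP => _.
  rewrite ger0_norm ?sqrtr_ge0 // ler_sqrt // (_ : t3 - t1 = (t2 - t1) + (t3 - t2)).
    by apply: ratio_le; rewrite // (lt_le_trans g0).
  by ring.
case: ifP => _; last by rewrite normr0 sqrtr_ge0.
rewrite normrN ger0_norm ?sqrtr_ge0 // ler_sqrt // (_ : t3 - t1 = (t3 - t2) + (t2 - t1)).
  by apply: ratio_le; rewrite // (lt_le_trans g0).
by ring.
Qed.

Hypothesis pi_partition : forall n, is_partition (pi n).
Hypothesis pi_refines : forall n, {subset pi n <= pi n.+1}.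

Let pi_sorted n : sorted <%R (pi n). Proof. by case: (pi_partition n). Qed.

Lemma haar_triple_nth m n k : (m < n)%N -> (k < ntriples pi m)%N ->
  exists a1 a2 a3, [/\ (a1 < a2 < a3)%N, (a3 < size (pi n))%N,
    tt1 pi m k = (pi n)`_a1, tt2 pi m k = (pi n)`_a2 & tt3 pi m k = (pi n)`_a3].
Proof.
move=> mn km; have [t12 t23 [t1m t2m t3m] _] := haar_triple_spec (pi_sorted m.+1) km.
have subn := subset_chain pi_refines mn.
have [a1 a1n e1] := nthP 0 (subn _ t1m).
have [a2 a2n e2] := nthP 0 (subn _ t2m).
have [a3 a3n e3] := nthP 0 (subn _ t3m).
exists a1, a2, a3; split; [apply/andP; split | done..].
- by rewrite -(sorted_ltn_nthE (pi_sorted n)) // e1 e2.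
- by rewrite -(sorted_ltn_nthE (pi_sorted n)) // e2 e3.
Qed.

Lemma S12_ratio_bounds n m k : (m < n)%N -> (k < ntriples pi m)%N ->
  mingap (pi n) <= S1 pi n m k 1 / (tt2 pi m k - tt1 pi m k) <= mesh (pi n) /\
  mingap (pi n) <= S2 pi n m k 1 / (tt3 pi m k - tt2 pi m k) <= mesh (pi n).
Proof.
move=> mn km; have [t12 t23 _ _] := haar_triple_spec (pi_sorted m.+1) km.
have [a1 [a2 [a3 [/andP[a12 a23] a3n e1 e2 e3]]]] := haar_triple_nth mn km.
have ratio_bounds d S : 0 < d ->
    mingap (pi n) * d <= S <= mesh (pi n) * d ->
    mingap (pi n) <= S / d <= mesh (pi n).
  by move=> d0 /andP[gS SG]; rewrite ler_pdivlMr ?ler_pdivrMr ?gS.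
rewrite /S1 /S2 e1 e2 e3 in t12 t23 *; split; apply: ratio_bounds.
- by rewrite subr_gt0.
- exact: Ssum1_nth_bounds (ltnW a12) (ltn_trans a23 a3n).
- by rewrite subr_gt0.
- exact: Ssum1_nth_bounds (ltnW a23) a3n.
Qed.

Lemma acoef1_bounds n m k : (m < n)%N -> (k < ntriples pi m)%N ->
  mingap (pi n) <= acoef pi n m k 1 <= mesh (pi n).
Proof.
move=> mn km; have [t12 t23 _ _] := haar_triple_spec (pi_sorted m.+1) km.
have [S1b S2b] := S12_ratio_bounds mn km.
rewrite /acoef (_ : tt3 pi m k - tt1 pi m k =
  (tt2 pi m k - tt1 pi m k) + (tt3 pi m k - tt2 pi m k)); last by ring.
by apply: weighted_ratio_bounds; rewrite ?subr_gt0.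
Qed.

Lemma bcoef1_nested_bound (L : R) n m k m' k' :
  (forall j, mesh (pi j) <= L * mingap (pi j.+1)) ->
  (m < n)%N -> (k < ntriples pi m)%N -> (k' < ntriples pi m')%N ->
  supp_sub pi m k m' k' ->
  `|bcoef pi n m k m' k' 1|
    <= Num.sqrt L * (mesh (pi n) - mingap (pi n)) * Num.sqrt (mesh (pi m) / mesh (pi m')).
Proof.
move=> meshL mn km km' sub; rewrite /bcoef sub /bnest.
have [t12 t23 _ [i ip [it1 it3]]] := haar_triple_spec (pi_sorted m.+1) km.
have [t12' t23' [t1' t2' t3'] _] := haar_triple_spec (pi_sorted m'.+1) km'.
have [S1b S2b] := S12_ratio_bounds mn km.
have g0 : 0 < mingap (pi m'.+1) := mingap_gt0 (pi_sorted _).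
have mesh0 : 0 < mesh (pi m') := mesh_gt0 (pi_partition _).
have psiB : `|psi pi m' k' (tt1 pi m k)| <= Num.sqrt L * Num.sqrt (mesh (pi m'))^-1.
  have L0 : 0 < L by rewrite -(pmulr_lgt0 _ g0); exact: lt_le_trans mesh0 (meshL m').
  apply: le_trans (psi_le_sqrt_inv (tt1 pi m k) g0
    (mingap_le_sub (pi_sorted _) t1' t2' t12') (mingap_le_sub (pi_sorted _) t2' t3' t23')) _.
  rewrite -sqrtrM ?(ltW L0) // ler_sqrt ?mulr_ge0 ?invr_ge0 ?(ltW L0) ?(ltW mesh0) //.
  rewrite -[_^-1]div1r ler_pdivrMr // mulrAC ler_pdivlMr // mul1r.
  exact: meshL.
have dm : (tt2 pi m k - tt1 pi m k) + (tt3 pi m k - tt2 pi m k) <= mesh (pi m).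
  by apply: le_trans (gap_le_mesh ip); lra.
rewrite (_ : tt3 pi m k - tt1 pi m k =
  (tt2 pi m k - tt1 pi m k) + (tt3 pi m k - tt2 pi m k)); last by ring.
apply: le_trans (nested_coef_bound psiB _ _ dm S1b S2b) _; rewrite ?subr_gt0 //.
by rewrite sqrtrM ?(ltW (mesh_gt0 _)) // le_eqVlt; apply/orP; left; apply/eqP; ring.
Qed.

Lemma bcoef_disjoint n m k m' k' t :
  (k < ntriples pi m)%N -> (k' < ntriples pi m')%N ->
  supp_disj pi m k m' k' -> bcoef pi n m k m' k' t = 0.
Proof.
move=> km km' disj; rewrite /bcoef /supp_sub.
have [t12 t23 _ _] := haar_triple_spec (pi_sorted m.+1) km.
have [t12' t23' _ _] := haar_triple_spec (pi_sorted m'.+1) km'.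
have not_nested (u1 u3 v1 v3 : R) : (u3 <= v1) || (v3 <= u1) ->
    u1 < u3 -> v1 < v3 -> (v1 <= u1) && (u3 <= v3) = false.
  by move=> uv u13 v13; apply/negbTE/negP => /andP[]; move: uv; lra.
have t13 := lt_trans t12 t23; have t13' := lt_trans t12' t23'.
by rewrite !not_nested // orbC.
Qed.

End HaarCoefficients.

Theorem mainTheorem6 (R : realType) (pi : nat -> seq R) :
  finitely_refining pi ->
  (forall n m k, (0 < n)%N -> (m < n)%N -> (k < ntriples pi m)%N ->
     mingap (pi n) <= acoef pi n m k 1 <= mesh (pi n))
  /\
  (balanced pi ->
   exists C : R, forall n m k m' k',
     (0 < n)%N -> (m < n)%N -> (m' < n)%N ->
     (k < ntriples pi m)%N -> (k' < ntriples pi m')%N ->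
     (m, k) != (m', k') ->
     (supp_sub pi m k m' k' ->
        `|bcoef pi n m k m' k' 1|
          <= C * (mesh (pi n) - mingap (pi n)) * Num.sqrt (mesh (pi m) / mesh (pi m')))
     /\ (supp_disj pi m k m' k' -> bcoef pi n m k m' k' 1 = 0)).
Proof.
move=> [_ pi_part pi_sub _ [M countM]].
have pi_sorted n : sorted <%R (pi n) by case: (pi_part n).
split=> [n m k _ mn km | [K balK]]; first exact: (acoef1_bounds pi_part pi_sub).
have meshL j : mesh (pi j) <= M%:R * K * mingap (pi j.+1).
  apply: le_trans (mesh_le_refinement (pi_sorted _) (pi_sorted _) (pi_sub j) (countM j)) _.
  by rewrite -mulrA ler_wpM2l // -ler_pdivrMr ?mingap_gt0 // balK.
exists (Num.sqrt (M%:R * K)) => n m k m' k' _ mn _ km km' _; split.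
  exact: (bcoef1_nested_bound pi_part pi_sub).
exact: (bcoef_disjoint pi_part).
Qed.
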